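(* Let $d\ge 2$ and let $C$, $C_1$, $C_2$ be $d$-dimensional copulas admitting tail copulas $\Lambda(\cdot;C)$, $\Lambda_1(\cdot;C_1)$, $\Lambda_2(\cdot;C_2)$, respectively. Then: (i) The supremum in $\lambda^\ast(C)=\sup_{\bm b\in\mathcal B}\Lambda(\bm b;C)$ is attained; hence $\lambda^\ast(C)=\max_{\bm b\in\mathcal B}\Lambda(\bm b;C)$. (ii) $\lambda^\ast(C)=1$ if and only if $\Lambda(\bm x;C)=\min\{x_1,\dots,x_d\}$ for all $\bm x\in(0,\infty)^d$. (iii) $\lambda^\ast(C)=0$ if and only if $\Lambda(\bm x;C)=0$ for all $\bm x\in(0,\infty)^d$. (iv) If $\Lambda_1(\bm x;C_1)\le\Lambda_2(\bm x;C_2)$ for all $\bm x\in(0,\infty)^d$, then $\lambda^\ast(C_1)\le\lambda^\ast(C_2)$. (v) For all $t\in[0,1]$, $\lambda^\ast(tC_1+(1-t)C_2)\le t\lambda^\ast(C_1)+(1-t)\lambda^\ast(C_2)$. (vi) Let $(C_n)_{n\in\mathbb N}$ be a sequence of $d$-dimensional copulas each admitting a tail copula. If $\Lambda(\bm x;C_n)\to\Lambda(\bm x;C)$ for every $\bm x\in(0,\infty)^d$, then $\lambda^\ast(C_n)\to\lambda^\ast(C)$.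
   Context: A $d$-dimensional copula is a distribution function on $[0,1]^d$ with standard uniform margins. If for a copula $C$ the limit $\Lambda(\bm x;C)=\lim_{t\downarrow0}C(t\bm x)/t$ exists for every $\bm x\in(0,\infty)^d$, the function $\Lambda(\cdot;C):(0,\infty)^d\to[0,\infty)$ is called the (lower) tail copula of $C$. Let $\mathcal B=\{\bm b\in(0,\infty)^d:\prod_{j=1}^d b_j=1\}$. The maximal tail concordance measure (MTCM) of $C$ is $\lambda^\ast(C)=\sup_{\bm b\in\mathcal B}\Lambda(\bm b;C)$. *)

From HB Require Import structures.
From mathcomp Require Import all_boot all_order all_algebra.
From mathcomp Require Import all_classical all_reals all_analysis.
Set Implicit Arguments. Unset Strict Implicit. Unset Printing Implicit Defensive.
Import Order.TTheory GRing.Theory Num.Theory.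
Import numFieldNormedType.Exports.
Local Open Scope classical_set_scope.
Local Open Scope ring_scope.

Section Copulas.
Variables (R : realType) (d : nat).

Definition in_cube (u : 'I_d -> R) : Prop := forall j, 0 <= u j <= 1.
Definition pos_orthant (x : 'I_d -> R) : Prop := forall j, 0 < x j.

Definition vertex (a b : 'I_d -> R) (S : {set 'I_d}) : 'I_d -> R :=
  fun j => if j \in S then b j else a j.

Definition Cvolume (C : ('I_d -> R) -> R) (a b : 'I_d -> R) : R :=
  \sum_(S : {set 'I_d}) (-1) ^+ (d - #|S|) * C (vertex a b S).

(* A d-dimensional copula (Nelsen's definition): a function on [0,1]^d that is
   grounded, has uniform margins and is d-increasing; equivalently the
   distribution function of a probability on [0,1]^d with uniform margins. *)
Definition copula (C : ('I_d -> R) -> R) : Prop :=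
  [/\ (forall u, in_cube u -> (exists j, u j = 0) -> C u = 0),
      (forall u, in_cube u -> forall j, (forall k, k != j -> u k = 1) -> C u = u j)
    & (forall a b, in_cube a -> in_cube b -> (forall j, a j <= b j) ->
         0 <= Cvolume C a b)].

Definition scaled (C : ('I_d -> R) -> R) (x : 'I_d -> R) : R -> R :=
  fun t => C (fun j => t * x j) / t.

Definition has_tail_copula (C : ('I_d -> R) -> R) : Prop :=
  forall x, pos_orthant x -> cvg (scaled C x @ 0^'+).

Definition tail_copula (C : ('I_d -> R) -> R) (x : 'I_d -> R) : R :=
  lim (scaled C x @ 0^'+).

Definition Bset : set ('I_d -> R) :=
  [set b | pos_orthant b /\ \prod_j b j = 1].

Definition mtcm (C : ('I_d -> R) -> R) : R := sup (tail_copula C @` Bset).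

Definition coord_min (x : 'I_d -> R) : R := inf (range x).

End Copulas.

From HB Require Import structures.
From mathcomp Require Import all_boot all_order all_algebra.
From mathcomp Require Import all_classical all_reals all_analysis.
From mathcomp Require Import zify lra.
Set Implicit Arguments. Unset Strict Implicit. Unset Printing Implicit Defensive.
Import Order.TTheory GRing.Theory Num.Theory.
Import numFieldNormedType.Exports.
Local Open Scope classical_set_scope.
Local Open Scope ring_scope.

(* The tail copula L of a copula is nonnegative, bounded by each coordinate,
   monotone and positively homogeneous; the last two properties make it
   relatively continuous: if every y_j is within a factor 1 +- δ of x_j, then
   L y is within a factor 1 +- δ of L x.  A point of B with a coordinate below
   c has L-value below c, so for 0 < c < λ* the supremum over B equals the
   supremum over the compact set B ∩ [c, oo)^d, where the continuous L attains
   it: this is (i), from which (ii)-(v) follow quickly.  For (vi), the same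
   reduction and a finite grid on B ∩ [ε, oo)^d, combined with homogeneity and
   monotonicity, turn the pointwise convergence of the tail copulas into a
   uniform bound on that set. *)

Lemma cvg_at_right0_mulr (R : realType) (c : R) :
  0 < c -> (fun t => t * c) @ 0^'+ --> 0^'+.
Proof.
move=> c0 P [r /= r0 HP]; exists (r / c) => /=; first by rewrite divr_gt0.
move=> t /= tr t0; apply: (HP _ _ (mulr_gt0 t0 c0)) => /=.
by move: tr; rewrite !sub0r !normrN !gtr0_norm ?mulr_gt0 // ltr_pdivlMr.
Qed.

Section Copula.
Variables (R : realType) (d : nat) (C : ('I_d -> R) -> R).
Hypothesis cC : copula C.
Implicit Types (u v : 'I_d -> R).

Definition set_coord u (j : 'I_d) (a : R) : 'I_d -> R :=
  fun k => if k == j then a else u k.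

(* The C-volume of the box between [set_coord 0 j a] and [u]: every vertex
   other than [u] and [set_coord u j a] has a zero coordinate. *)
Lemma copula_set_coord_le u j a :
  in_cube u -> 0 <= a <= u j -> C (set_coord u j a) <= C u.
Proof.
case: cC => Cg _ Cv uc /andP[a0 au].
pose lo := set_coord (fun=> 0) j a.
have loc : in_cube lo.
  move=> k; rewrite /lo /set_coord; case: eqP => _; last by rewrite lexx ler01.
  by rewrite a0 (le_trans au) //; case/andP: (uc j).
have lou k : lo k <= u k.
  by rewrite /lo /set_coord; case: eqP => [->//|_]; case/andP: (uc k).
have := Cv lo u loc uc lou; rewrite /Cvolume.
have jT : [set~ j]%SET != [set: 'I_d]%SET by apply/eqP => /setP /(_ j); rewrite !inE eqxx.
rewrite (bigD1 [set: 'I_d]%SET) // (bigD1 [set~ j]%SET) //= big1 ?addr0; last first.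
  move=> S /andP[ST Sj]; rewrite (Cg _ _ _) ?mulr0 //.
    by move=> k; rewrite /vertex; case: (k \in S).
  have [/existsP[k /andP[kj kS]]|/existsPn allS] :=
    boolP [exists k, (k != j) && (k \notin S)].
    by exists k; rewrite /vertex (negbTE kS) /lo /set_coord (negbTE kj).
  have SE : S = (if j \in S then [set: 'I_d] else [set~ j])%SET.
    apply/setP => k; have [->|kj] := eqVneq k j.
      by case: (j \in S); rewrite !inE ?eqxx.
    by move: (allS k); rewrite kj negbK => ->; case: (j \in S); rewrite !inE.
  by move: ST Sj; rewrite SE; case: (j \in S); rewrite eqxx.
rewrite cardsT cardsC1 card_ord subnn expr0 mul1r.
have -> : (d - d.-1 = 1)%N by have := ltn_ord j; lia.
have -> : vertex lo u [set: 'I_d]%SET = u by apply: funext => k; rewrite /vertex inE.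
have -> : vertex lo u [set~ j]%SET = set_coord u j a.
  by apply: funext => k; rewrite /vertex /lo /set_coord !inE; case: eqVneq.
by rewrite expr1 mulN1r subr_ge0.
Qed.

Lemma copula_mono u v :
  in_cube u -> in_cube v -> (forall j, u j <= v j) -> C u <= C v.
Proof.
move=> uc vc uv.
pose w m : 'I_d -> R := fun k => if (k < m)%N then v k else u k.
have wc m : in_cube (w m) by move=> k; rewrite /w; case: ifP.
suff le_w m : (m <= d)%N -> C u <= C (w m).
  have -> : v = w d by apply: funext => k; rewrite /w ltn_ord.
  exact: le_w.
elim: m => [_|m IH md].
  by have -> : w 0%N = u by apply: funext => k; rewrite /w ltn0.
apply: le_trans (IH (ltnW md)) _.
have -> : w m = set_coord (w m.+1) (Ordinal md) (u (Ordinal md)).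
  apply: funext => k; rewrite /w /set_coord ltnS.
  case: eqVneq => [->|kj] /=; first by rewrite ltnn.
  by rewrite [(k <= m)%N]leq_eqVlt; case: eqP => // km; case/eqP: kj; apply: val_inj.
apply: copula_set_coord_le => //; case/andP: (uc (Ordinal md)) => -> _ /=.
by rewrite /w /= ltnSn uv.
Qed.

Lemma copula_ge0 u : (0 < d)%N -> in_cube u -> 0 <= C u.
Proof.
move=> d0 uc; have zc : in_cube (fun _ : 'I_d => 0 : R) by move=> k; rewrite lexx ler01.
case: (cC) => Cg _ _; rewrite -(Cg _ zc); last by exists (Ordinal d0).
by apply: copula_mono => // k; case/andP: (uc k).
Qed.

Lemma copula_le_coord u j : in_cube u -> C u <= u j.
Proof.
move=> uc; pose v := set_coord (fun=> 1) j (u j).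
have vc : in_cube v.
  by move=> k; rewrite /v /set_coord; case: eqP => _ //; rewrite ler01 lexx.
have <- : C v = u j.
  case: cC => _ Cm _; rewrite (Cm v vc j) /v /set_coord ?eqxx //.
  by move=> k /negbTE ->.
apply: copula_mono => // k; rewrite /v /set_coord.
by case: eqVneq => [->//|_]; case/andP: (uc k).
Qed.

End Copula.

Section Orthant.
Variables (R : realType) (d : nat).
Implicit Types (x b : 'I_d -> R).

Lemma pos_orthantZ c x : 0 < c -> pos_orthant x -> pos_orthant (fun j => c * x j).
Proof. by move=> c0 xp j; rewrite mulr_gt0. Qed.

Lemma pos_orthant_le_sum x j : pos_orthant x -> x j <= \sum_k x k.
Proof.
move=> xp; rewrite (bigD1 j) //= lerDl sumr_ge0 // => k _; exact: ltW.
Qed.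

Lemma near0_in_cube x : pos_orthant x ->
  \forall t \near 0^'+, 0 < t /\ in_cube (fun j => t * x j).
Proof.
move=> xp; pose M := \sum_j x j + 1.
have xM j : x j < M by rewrite /M ltr_pwDr ?pos_orthant_le_sum.
have M0 : 0 < M by rewrite /M ltr_wpDl // sumr_ge0 // => j _; exact: ltW.
near=> t.
have t0 : 0 < t by near: t; exact: nbhs_right_gt.
have tM : t < M^-1 by near: t; apply: nbhs_right_lt; rewrite invr_gt0.
split=> // j; apply/andP; split; first by rewrite mulr_ge0 // ltW.
apply: ltW; apply: (@lt_trans _ _ (t * M)); first by rewrite ltr_pM2l.
by rewrite -ltr_pdivlMr // mul1r.
Unshelve. all: by end_near.
Qed.

Lemma Bset_one : Bset (fun _ : 'I_d => 1 : R).
Proof. by split; [move=> j; exact: ltr01 | rewrite prodr_const expr1n]. Qed.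

Definition Bset_ge (c : R) : set ('I_d -> R) :=
  [set b | Bset b /\ forall k, c <= b k].

Lemma Bset_ge_coord_le c b j : 0 < c -> Bset_ge c b -> b j <= (c ^+ d.-1)^-1.
Proof.
move=> c0 [[bp bprod] bc].
rewrite -[(_)^-1]mul1r ler_pdivlMr ?exprn_gt0 // -bprod (bigD1 j) //= ler_pM2l //.
have -> : c ^+ d.-1 = \prod_(k | k != j) c by rewrite prodr_const cardC1 card_ord.
by apply: ler_prod => k _; rewrite bc ltW.
Qed.

Lemma row_prod_continuous (s : seq 'I_d) :
  continuous (fun v : 'rV[R]_d => \prod_(i <- s) v ord0 i).
Proof.
elim: s => [|i s IH].
  by under eq_fun do rewrite big_nil; exact: cst_continuous.
under eq_fun do rewrite big_cons.
by move=> v; apply: continuousM; [exact: coord_continuous | exact: IH].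
Qed.

Lemma compact_Bset_ge c : 0 < c -> compact [set v : 'rV[R]_d | Bset_ge c (v ord0)].
Proof.
move=> c0; pose D := (c ^+ d.-1)^-1.
have -> : [set v : 'rV[R]_d | Bset_ge c (v ord0)] =
    [set v | forall i, `[c, D]%classic (v ord0 i)] `&`
    [set v | \prod_i v ord0 i = 1].
  apply/seteqP; split => v /=.
    move=> Bv; have [[_ vprod] vc] := Bv; split => // i.
    by rewrite /= in_itv /= vc Bset_ge_coord_le.
  case=> vcD vprod.
  have vc i : c <= v ord0 i by have := vcD i; rewrite /= in_itv /= => /andP[].
  by split=> //; split=> // i; apply: lt_le_trans (vc i).
apply: compact_closedI.
  by apply: (@rV_compact _ _ (fun=> `[c, D]%classic)) => i; exact: segment_compact.
apply: (@preimage_closed _ _ (fun v : 'rV[R]_d => \prod_i v ord0 i) [set x | x = 1]).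
  by move=> v _; exact: row_prod_continuous.
exact: closed_eq.
Qed.

Lemma grid_cover h D : 0 < h -> exists N, forall b, (forall j, 0 <= b j <= D) ->
  exists k : {ffun 'I_d -> 'I_N}, forall j, b j <= ((k j)%:R + 1) * h <= b j + h.
Proof.
move=> h0; exists (Num.truncn (D / h)).+1 => b bD.
have bh j : 0 <= b j / h by apply: divr_ge0; [case/andP: (bD j) | exact: ltW].
exists [ffun j => inord (Num.truncn (b j / h))] => j.
rewrite ffunE inordK; last first.
  by rewrite ltnS le_truncn // ler_pM2r ?invr_gt0 //; case/andP: (bD j).
have /andP[lo hi] := truncn_itv (bh j).
rewrite -natr1 in hi; rewrite -ler_pdivrMr // (ltW hi) /=.
by rewrite mulrDl mul1r lerD2r -ler_pdivlMr.
Qed.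

Lemma coord_min_attained x : (0 < d)%N ->
  exists2 k, coord_min x = x k & forall j, x k <= x j.
Proof.
move=> d0; case: (@arg_minP _ _ _ (Ordinal d0) xpredT x isT) => k _ xk.
exists k; last by move=> j; exact: xk.
rewrite /coord_min; apply/eqP; rewrite eq_le; apply/andP; split.
  by apply: ge_inf; [exists (x k) => _ [j _ <-]; exact: xk | exists k].
by apply: lb_le_inf; [exists (x k), k | move=> _ [j _ <-]; exact: xk].
Qed.

End Orthant.

Arguments Bset_one {R d}.

Lemma tail_copula_mix (R : realType) (d : nat) (C1 C2 : ('I_d -> R) -> R) a b x :
  cvg (scaled C1 x @ 0^'+) -> cvg (scaled C2 x @ 0^'+) ->
  tail_copula (fun u => a * C1 u + b * C2 u) x =
  a * tail_copula C1 x + b * tail_copula C2 x.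
Proof.
move=> h1 h2; apply: cvg_lim => //.
have -> : scaled (fun u => a * C1 u + b * C2 u) x =
    fun t => a * scaled C1 x t + b * scaled C2 x t.
  by apply: funext => t; rewrite /scaled mulrDl !mulrA.
by apply: cvgD; apply: cvgMl_tmp.
Qed.

Section TailCopula.
Variables (R : realType) (d : nat) (C : ('I_d -> R) -> R).
Hypotheses (cC : copula C) (hC : has_tail_copula C).
Implicit Types (x y b : 'I_d -> R).
Local Notation L := (tail_copula C).

Lemma tail_copula_ge0 x : (0 < d)%N -> pos_orthant x -> 0 <= L x.
Proof.
move=> d0 xp; apply: limr_ge; first exact: hC.
near=> t; have [t0 tc] : 0 < t /\ in_cube (fun j => t * x j).
  by near: t; exact: near0_in_cube.
by apply: divr_ge0; [exact: copula_ge0 | exact: ltW].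
Unshelve. all: by end_near.
Qed.

Lemma tail_copula_le_coord x j : pos_orthant x -> L x <= x j.
Proof.
move=> xp; apply: limr_le; first exact: hC.
near=> t; have [t0 tc] : 0 < t /\ in_cube (fun j => t * x j).
  by near: t; exact: near0_in_cube.
by rewrite /scaled ler_pdivrMr // mulrC; exact: copula_le_coord.
Unshelve. all: by end_near.
Qed.

Lemma tail_copula_mono x y :
  pos_orthant x -> pos_orthant y -> (forall j, x j <= y j) -> L x <= L y.
Proof.
move=> xp yp xy; apply: ler_lim; [exact: hC | exact: hC |].
near=> t; have [t0 tx] : 0 < t /\ in_cube (fun j => t * x j).
  by near: t; exact: near0_in_cube.
have [_ ty] : 0 < t /\ in_cube (fun j => t * y j).
  by near: t; exact: near0_in_cube.
rewrite /scaled ler_pM2r ?invr_gt0 //; apply: copula_mono => // j.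
by rewrite ler_pM2l.
Unshelve. all: by end_near.
Qed.

Lemma tail_copulaZ c x : 0 < c -> pos_orthant x -> L (fun j => c * x j) = c * L x.
Proof.
move=> c0 xp; apply: cvg_lim => //.
have -> : scaled C (fun j => c * x j) = fun t => c * scaled C x (t * c).
  apply: funext => t; rewrite /scaled.
  have -> : (fun j => t * (c * x j)) = (fun j => t * c * x j).
    by apply: funext => j; rewrite mulrA.
  by rewrite invfM mulrCA (mulrCA c) mulfV ?gt_eqF // mulr1.
by apply: cvgMl_tmp; exact: (cvg_comp _ _ (cvg_at_right0_mulr c0) (hC xp)).
Qed.

Lemma tail_copula_le_scaled a x y : 0 < a -> pos_orthant x -> pos_orthant y ->
  (forall j, x j <= a * y j) -> L x <= a * L y.
Proof.
move=> a0 xp yp xy; rewrite -tail_copulaZ //.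
by apply: tail_copula_mono => //; exact: pos_orthantZ.
Qed.

Lemma tail_copula_dist_le (δ : R) x y : (0 < d)%N -> 0 < δ < 1 ->
  pos_orthant x -> pos_orthant y ->
  (forall j, `|x j - y j| <= δ * x j) -> `|L x - L y| <= δ * L x.
Proof.
move=> d0 /andP[δ0 δ1] xp yp xy.
have Lx0 := tail_copula_ge0 d0 xp.
have up : L y <= (1 + δ) * L x.
  apply: tail_copula_le_scaled => // [|j]; first lra.
  by have := xy j; rewrite ler_norml => /andP[+ _]; lra.
have lo : (1 - δ) * L x <= L y.
  rewrite -tail_copulaZ //; last lra.
  apply: tail_copula_mono => //; first by apply: pos_orthantZ => //; lra.
  by move=> j; have := xy j; rewrite ler_norml => /andP[_]; lra.
by rewrite ler_norml; apply/andP; split; nra.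
Qed.

End TailCopula.

Section MaximalTailConcordance.
Variables (R : realType) (d : nat) (C : ('I_d -> R) -> R).
Hypotheses (d0 : (0 < d)%N) (cC : copula C) (hC : has_tail_copula C).
Implicit Types (x b : 'I_d -> R).
Local Notation L := (tail_copula C).

Lemma tail_copula_Bset_le1 b : Bset b -> L b <= 1.
Proof.
case=> bp bprod; have L0 := tail_copula_ge0 cC hC d0 bp.
rewrite -(expr_le1 d0 L0) -[d in _ ^+ d]card_ord -prodr_const -[X in _ <= X]bprod.
by apply: ler_prod => j _; rewrite L0 tail_copula_le_coord.
Qed.

Lemma has_sup_tail_copula_Bset : has_sup (L @` @Bset R d).
Proof.
split; first by exists (L (fun=> 1)), (fun=> 1); first exact: Bset_one.
by exists 1 => _ [b Bb <-]; exact: tail_copula_Bset_le1.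
Qed.

Lemma mtcm_ub b : Bset b -> L b <= mtcm C.
Proof. by move=> Bb; apply: ub_le_sup (proj2 has_sup_tail_copula_Bset) _ _; exists b. Qed.

Lemma mtcm_le m : (forall b, Bset b -> L b <= m) -> mtcm C <= m.
Proof.
move=> Lm; apply: ge_sup; last by move=> _ [b Bb <-]; exact: Lm.
by exists (L (fun=> 1)), (fun=> 1); first exact: Bset_one.
Qed.

Lemma mtcm_ge0 : 0 <= mtcm C.
Proof.
exact: le_trans (tail_copula_ge0 cC hC d0 (proj1 Bset_one)) (mtcm_ub Bset_one).
Qed.

Lemma mtcm_le1 : mtcm C <= 1.
Proof. exact: mtcm_le tail_copula_Bset_le1. Qed.

(* A point of [Bset] with a coordinate below [c] contributes at most [c]. *)
Lemma mtcm_le_Bset_ge c m : c <= m ->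
  (forall b, Bset_ge c b -> L b <= m) -> mtcm C <= m.
Proof.
move=> cm Lm; apply: mtcm_le => b Bb.
have [bc|/existsNP[k /negP]] := pselect (forall k, c <= b k); first exact: Lm.
rewrite -ltNge => bk.
exact: le_trans (tail_copula_le_coord cC hC k (proj1 Bb)) (le_trans (ltW bk) cm).
Qed.

Lemma tail_copula_row_continuous c : 0 < c ->
  {within [set v : 'rV[R]_d | Bset_ge c (v ord0)], continuous (fun v => L (v ord0))}.
Proof.
move=> c0; apply/subspace_continuousP => v [[vp vprod] vc].
apply/cvgrPdist_le => e e0.
pose δ := Num.min (e / 2) (1 / 2).
have δ0 : 0 < δ by rewrite lt_min !divr_gt0.
have δ1 : δ < 1 by rewrite gt_min; apply/orP; right; lra.
have δe : δ <= e / 2 by rewrite ge_min lexx.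
rewrite near_withinE; apply/nbhs_ballP; exists (δ * c); first by rewrite /= mulr_gt0.
move=> w vw [[wp _] _].
apply: le_trans (tail_copula_dist_le cC hC (δ := δ) d0 _ vp wp _) _.
- by rewrite δ0 δ1.
- move=> j; case: vw => _ /(_ ord0 j) /ltW vwj; apply: le_trans vwj _.
  by rewrite ler_pM2l.
- have := tail_copula_Bset_le1 (conj vp vprod); have := tail_copula_ge0 cC hC d0 vp.
  nra.
Qed.

Lemma mtcm_attained : exists2 b, Bset b & L b = mtcm C.
Proof.
have rowK b : (\row_j b j : 'rV[R]_d) ord0 = b by apply: funext => j; rewrite mxE.
have [s0|s0] := leP (mtcm C) 0.
  exists (fun=> 1); first exact: Bset_one.
  apply/eqP; rewrite eq_le (mtcm_ub Bset_one) /=.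
  exact: le_trans s0 (tail_copula_ge0 cC hC d0 (proj1 Bset_one)).
pose c := mtcm C / 2; have c0 : 0 < c by rewrite /c divr_gt0.
have [_ [b0 Bb0 <-]] := sup_adherent c0 has_sup_tail_copula_Bset.
rewrite -[sup _]/(mtcm C) => Lb0; have {}Lb0 : c < L b0 by move: Lb0; rewrite /c; lra.
have b0c : Bset_ge c b0.
  split=> // k; apply/ltW/(lt_le_trans Lb0).
  exact: (tail_copula_le_coord cC hC k (proj1 Bb0)).
have [|v vK vmax] :=
  compact_EVT_max _ (compact_Bset_ge c0) (tail_copula_row_continuous c0).
  by exists (\row_j b0 j); rewrite /= rowK.
have le_Lv b : Bset_ge c b -> L b <= L (v ord0).
  by move=> Bb; rewrite -(rowK b); apply: vmax; rewrite inE /= rowK.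
rewrite inE in vK; exists (v ord0); first exact: (proj1 vK).
apply/eqP; rewrite eq_le (mtcm_ub (proj1 vK)) /=.
apply: (mtcm_le_Bset_ge (c := c)) => //.
exact: ltW (lt_le_trans Lb0 (le_Lv _ b0c)).
Qed.

Lemma mtcm_eq1 : mtcm C = 1 <-> forall x, pos_orthant x -> L x = coord_min x.
Proof.
have L1_min : L (fun=> 1) = 1 -> forall x, pos_orthant x -> L x = coord_min x.
  move=> L1 x xp; have [k -> xk] := coord_min_attained x d0.
  apply/eqP; rewrite eq_le tail_copula_le_coord //=.
  rewrite -[x k]mulr1 -L1 -(tail_copulaZ hC (xp k) (proj1 Bset_one)).
  apply: tail_copula_mono => // [|j]; last by rewrite mulr1.
  exact: pos_orthantZ (proj1 Bset_one).
split=> [m1|Lmin].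
  have [b Bb] := mtcm_attained; rewrite m1 => Lb; apply: L1_min.
  have b1 j : 1 <= b j by rewrite -Lb; exact: (tail_copula_le_coord cC hC j (proj1 Bb)).
  suff -> : (fun=> 1) = b by [].
  apply: funext => j; apply/eqP; rewrite eq_le b1 /=.
  by have := Bset_ge_coord_le j ltr01 (conj Bb b1); rewrite expr1n invr1.
have L1 : L (fun=> 1) = 1.
  have [k min1 _] := coord_min_attained (fun _ : 'I_d => 1 : R) d0.
  by rewrite Lmin ?min1 //; exact: (proj1 Bset_one).
by apply/eqP; rewrite eq_le mtcm_le1 -{1}L1 (mtcm_ub Bset_one).
Qed.

Lemma mtcm_eq0 : mtcm C = 0 <-> forall x, pos_orthant x -> L x = 0.
Proof.
split=> [m0 x xp|L0]; last first.
  by apply/eqP; rewrite eq_le mtcm_ge0 andbT; apply: mtcm_le => b [bp _]; rewrite L0.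
have L1 : L (fun=> 1) = 0.
  apply/eqP; rewrite eq_le (tail_copula_ge0 cC hC d0 (proj1 Bset_one)) andbT -m0.
  exact: mtcm_ub Bset_one.
set M := \sum_k x k.
have xM j : x j <= M * 1 by rewrite mulr1 pos_orthant_le_sum.
have M0 : 0 < M := lt_le_trans (xp (Ordinal d0)) (pos_orthant_le_sum _ xp).
apply/eqP; rewrite eq_le tail_copula_ge0 // andbT -(mulr0 M) -L1.
exact: (tail_copula_le_scaled cC hC M0 xp (proj1 Bset_one) xM).
Qed.

End MaximalTailConcordance.

Lemma le_mtcm (R : realType) (d : nat) (C1 C2 : ('I_d -> R) -> R) :
  (0 < d)%N -> copula C2 -> has_tail_copula C2 ->
  (forall x, pos_orthant x -> tail_copula C1 x <= tail_copula C2 x) ->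
  mtcm C1 <= mtcm C2.
Proof.
move=> d0 cC2 hC2 le12; apply: mtcm_le => b Bb.
exact: le_trans (le12 _ (proj1 Bb)) (mtcm_ub d0 cC2 hC2 Bb).
Qed.

Lemma mtcm_lincomb_le (R : realType) (d : nat) (C1 C2 : ('I_d -> R) -> R) a b :
  (0 < d)%N -> copula C1 -> copula C2 -> has_tail_copula C1 -> has_tail_copula C2 ->
  0 <= a -> 0 <= b ->
  mtcm (fun u => a * C1 u + b * C2 u) <= a * mtcm C1 + b * mtcm C2.
Proof.
move=> d0 cC1 cC2 hC1 hC2 a0 b0; apply: mtcm_le => x Bx.
rewrite tail_copula_mix; [|exact: hC1 (proj1 Bx)|exact: hC2 (proj1 Bx)].
by apply: lerD; apply: ler_wpM2l => //; exact: mtcm_ub.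
Qed.

Section Continuity.
Variables (R : realType) (d : nat) (C : ('I_d -> R) -> R).
Hypotheses (d0 : (0 < d)%N) (cC : copula C) (hC : has_tail_copula C).
Variables (I : Type) (F : set_system I) (Cn : I -> ('I_d -> R) -> R).
Context {FF : Filter F}.
Hypotheses (cCn : forall n, copula (Cn n)) (hCn : forall n, has_tail_copula (Cn n)).
Hypothesis LCn : forall x, pos_orthant x ->
  tail_copula (Cn n) x @[n --> F] --> tail_copula C x.
Local Notation L := (tail_copula C).

Lemma mtcm_near_ge e : 0 < e -> \forall n \near F, mtcm C - e <= mtcm (Cn n).
Proof.
move=> e0; have [b Bb <-] := mtcm_attained d0 cC hC.
move/cvgrPdist_le: (LCn (proj1 Bb)) => /(_ e e0); apply: filterS => n.
rewrite ler_distlC => /andP[Lnb _].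
exact: le_trans Lnb (mtcm_ub d0 (cCn n) (@hCn n) Bb).
Qed.

(* Finitely many grid points of mesh [ε^2] control [Bset_ge ε] uniformly,
   by homogeneity and monotonicity. *)
Lemma mtcm_near_le e : 0 < e -> \forall n \near F, mtcm (Cn n) <= mtcm C + e.
Proof.
move=> e0; pose ε := e / 2; have ε0 : 0 < ε by rewrite divr_gt0.
have [N grid] := grid_cover d (ε ^+ d.-1)^-1 (mulr_gt0 ε0 ε0).
pose g (k : {ffun 'I_d -> 'I_N}) j := ((k j)%:R + 1) * (ε * ε).
have gp k : pos_orthant (g k) by move=> j; rewrite /g !mulr_gt0.
have near_g : \forall n \near F, forall k, tail_copula (Cn n) (g k) <= L (g k) + ε.
  apply: filter_forall => k; move/cvgrPdist_le: (LCn (gp k)) => /(_ ε ε0).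
  by apply: filterS => n; rewrite ler_distlC => /andP[_].
apply: filterS near_g => n near_g.
apply: (mtcm_le_Bset_ge (cCn n) (@hCn n) (c := ε)).
  by have := mtcm_ge0 d0 cC hC; rewrite /ε; lra.
move=> b [Bb bε].
have [k gb] : exists k, forall j, b j <= g k j <= b j + ε * ε.
  by apply: grid => j; rewrite ltW ?(proj1 Bb j) //=; exact: Bset_ge_coord_le.
have Lnb : tail_copula (Cn n) b <= tail_copula (Cn n) (g k).
  apply: (tail_copula_mono (cCn n) (@hCn n) (proj1 Bb) (gp k)) => j.
  by case/andP: (gb j).
have Lg : L (g k) <= (1 + ε) * L b.
  apply: (tail_copula_le_scaled cC hC _ (gp k) (proj1 Bb)) => [|j]; first lra.
  case/andP: (gb j) => _ /le_trans; apply.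
  by rewrite mulrDl mul1r lerD2l ler_pM2l.
have εLb : ε * L b <= ε * 1 by rewrite ler_pM2l // tail_copula_Bset_le1.
have := near_g k; have := mtcm_ub d0 cC hC Bb; have := splitr e; rewrite -/ε; lra.
Qed.

Lemma cvg_mtcm : mtcm (Cn n) @[n --> F] --> mtcm C.
Proof.
apply/cvgrPdist_le => e e0.
apply: filterS2 (mtcm_near_ge e0) (mtcm_near_le e0) => n lo hi.
by rewrite ler_distlC lo.
Qed.

End Continuity.

Unset Implicit Arguments.

Theorem proposition2p2 (R : realType) (d : nat) (hd : (2 <= d)%N)
  (C C1 C2 : ('I_d -> R) -> R) :
  copula C -> copula C1 -> copula C2 ->
  has_tail_copula C -> has_tail_copula C1 -> has_tail_copula C2 ->
  (* (i) *)
      (exists2 b, Bset b & tail_copula C b = mtcm C) /\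
      (* (ii) *)
      (mtcm C = 1 <-> forall x, pos_orthant x -> tail_copula C x = coord_min x) /\
      (* (iii) *)
      (mtcm C = 0 <-> forall x, pos_orthant x -> tail_copula C x = 0) /\
      (* (iv) *)
      ((forall x, pos_orthant x -> tail_copula C1 x <= tail_copula C2 x) ->
         mtcm C1 <= mtcm C2) /\
      (* (v) *)
      (forall t : R, 0 <= t <= 1 ->
         mtcm (fun u => t * C1 u + (1 - t) * C2 u) <= t * mtcm C1 + (1 - t) * mtcm C2) /\
      (* (vi) *)
      (forall Cn : nat -> ('I_d -> R) -> R,
         (forall n, copula (Cn n)) -> (forall n, has_tail_copula (Cn n)) ->
         (forall x, pos_orthant x ->
            tail_copula (Cn n) x @[n --> \oo] --> tail_copula C x) ->
         mtcm (Cn n) @[n --> \oo] --> mtcm C).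
Proof.
move=> cC cC1 cC2 hC hC1 hC2; have d0 : (0 < d)%N := ltnW hd.
split; first exact: mtcm_attained.
split; first exact: mtcm_eq1.
split; first exact: mtcm_eq0.
split; first exact: le_mtcm.
split; first by move=> t /andP[t0 t1]; apply: mtcm_lincomb_le; rewrite ?subr_ge0.
by move=> Cn cCn hCn LCn; exact: cvg_mtcm.
Qed.
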